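(* Let $p>2$ and $K/\mathbb{Q}_p$ finite unramified. For each $p$-bounded and non-Steinberg Hodge type $\underline{r}$, there exist a non-scalar tame inertial type $\tau$ and a profile $J\subset\mathbb{Z}/f'\mathbb{Z}$ such that $\underline{r}\sim r(\tau,J)$.
   Context: $K/\mathbb{Q}_p$ is unramified of degree $f$ with residue field $k$, embeddings $\kappa_i:k\hookrightarrow\overline{\mathbb{F}}_p$ indexed by $i\in\mathbb{Z}/f\mathbb{Z}$ with $\kappa_{i+1}^p=\kappa_i$, and $\omega_i$ the fundamental character of level $f$ attached to $\kappa_i$. A Hodge type is a tuple of integers $\underline{r}=(r_{i,1}\ge r_{i,2})_{i\in\mathbb{Z}/f\mathbb{Z}}$; it is $p$-bounded if $r_{i,1}-r_{i,2}\le p$ for all $i$, Steinberg if $r_{i,1}-r_{i,2}=p$ for all $i$. Write $\underline{r}\sim\underline{r}'$ if $r'_{i,j}=r_{i,j}+\lambda_i$ for some $(\lambda_i)\in\mathbb{Z}^f$ with $\sum_{i=0}^{f-1}p^{f-i}\lambda_i\equiv0\pmod{p^f-1}$ (equivalently $\prod_i\omega_i^{\lambda_i}$ trivial). $E$ is a sufficiently large coefficient field with ring of integers $\mathcal{O}$ and residue field $\mathbb{F}$. A non-scalar tame inertial type $\tau=\eta\oplus\eta':I_K\to\mathrm{GL}_2(\mathcal{O})$ is principal series if $\eta,\eta'$ extend to $G_K$ and cuspidal otherwise ($\eta'=\eta^{p^f}$); $f'=f$ resp. $2f$. Let $k'$ be the degree $f'$ extension of $k$, embeddings $\kappa'_i$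 ($i\in\mathbb{Z}/f'\mathbb{Z}$, $(\kappa'_{i+1})^p=\kappa'_i$, extending $\kappa_{i\bmod f}$), $\omega'_i$ the corresponding fundamental characters of level $f'$ of $I_K$ and $\widetilde\omega'_i$ their Teichmüller lifts. Define $\gamma_i\in[0,p-1]$ by $\eta\eta'^{-1}=\prod_{i\in\mathbb{Z}/f'\mathbb{Z}}(\widetilde\omega'_i)^{\gamma_i}$. A profile is any $J\subset\mathbb{Z}/f'\mathbb{Z}$ (principal series) or one with $i\in J\iff i+f\notin J$ (cuspidal). With $\delta_S$ the indicator of $S$: $s_{J,i}=p-1-\gamma_i-\delta_{J^c}(i)$ if $i-1\in J$, $s_{J,i}=\gamma_i-\delta_J(i)$ if $i-1\notin J$ ($f$-periodic, in $[-1,p-1]$); $t_{J,i}=\gamma_i+\delta_{J^c}(i)$ if $i-1\in J$, $0$ otherwise. $\Theta_J:k^\times\to\mathbb{F}^\times$ is the character with $\Theta_J\circ N_{k'/k}=\eta'\prod_{i}(\kappa'_i)^{t_{J,i}}$ ($\eta'$ viewed as a character of $k'^\times$ via the Artin map of the totally tamely ramified extension trivializing $\tau$); via local class field theory (uniformizers $\leftrightarrow$ geometric Frobenius) write $\Theta_J=\prod_{i=0}^{f-1}\omega_i^{\theta_{J,i}}$. Then $r(\tau,J)$ is the Hodge type with $r_{i,1}=1-\theta_{J,i}$, $r_{i,2}=-s_{J,i}-\theta_{J,i}$, well defined up to $\sim$. *)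

From mathcomp Require Import all_boot all_algebra.
Unset Printing Implicit Defensive.
Import GRing.Theory Num.Theory.
Local Open Scope ring_scope.

Definition hodge_type (f : nat) (r : 'I_f -> int * int) : Prop :=
  forall i, (r i).2 <= (r i).1.

Definition p_bounded (p f : nat) (r : 'I_f -> int * int) : Prop :=
  forall i, (r i).1 - (r i).2 <= p%:Z.

Definition steinberg (p f : nat) (r : 'I_f -> int * int) : Prop :=
  forall i, (r i).1 - (r i).2 = p%:Z.

Definition hodge_equiv (p f : nat) (r r' : 'I_f -> int * int) : Prop :=
  exists lam : 'I_f -> int,
    (forall i, (r' i).1 = (r i).1 + lam i /\ (r' i).2 = (r i).2 + lam i) /\
    (((p ^ f)%:Z - 1) %| \sum_(i < f) (p ^ (f - i))%:Z * lam i)%Z.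

(* A tame character of I_K of level n is \tilde\omega'_0^a for an exponent a
   (mod p^n - 1), where \omega'_0 is the fundamental character of level n
   attached to kappa'_0.  Note prod_i (\omega'_i)^{c_i} = (\omega'_0)^{sum_i c_i p^{n-i}}.
   - PrincipalSeries a b : eta = \tilde\omega_0^a, eta' = \tilde\omega_0^b (level f).
   - Cuspidal a : eta = \tilde\omega'_0^a (level 2f), eta' = eta^{p^f}. *)
Inductive tame_type :=
| PrincipalSeries of int & int
| Cuspidal of int.

Definition fprime (f : nat) (tau : tame_type) : nat :=
  match tau with PrincipalSeries _ _ => f | Cuspidal _ => (2 * f)%N end.

Definition eta_exp (tau : tame_type) : int :=
  match tau with PrincipalSeries a _ => a | Cuspidal a => a end.

Definition eta'_exp (p f : nat) (tau : tame_type) : int :=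
  match tau with PrincipalSeries _ b => b | Cuspidal a => a * (p ^ f)%:Z end.

Definition modulus (p n : nat) : int := (p ^ n)%:Z - 1.

(* non-scalar: eta <> eta'.  In the cuspidal case this says eta <> eta^{p^f},
   i.e. eta does not extend to G_K, so tau is genuinely cuspidal. *)
Definition non_scalar (p f : nat) (tau : tame_type) : bool :=
  ~~ ((modulus p (fprime f tau)) %| (eta_exp tau - eta'_exp p f tau))%Z.

(* exponent of eta eta'^{-1} w.r.t. \tilde\omega'_0, reduced to [0, p^{f'}-2] *)
Definition diff_exp (p f : nat) (tau : tame_type) : nat :=
  absz ((eta_exp tau - eta'_exp p f tau) %% modulus p (fprime f tau))%Z.

(* gamma_i in [0,p-1] with eta eta'^{-1} = prod_i (\tilde\omega'_i)^{gamma_i},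
   i.e. sum_i gamma_i p^{f'-i} = diff_exp mod p^{f'}-1: gamma_i is the base-p
   digit of diff_exp at position (f'-i) mod f'. *)
Definition gamma (p f : nat) (tau : tame_type) (i : nat) : nat :=
  let n := fprime f tau in
  ((diff_exp p f tau %/ p ^ ((n - i) %% n)) %% p)%N.

Definition inJ (n : nat) (J : {set 'I_n}) (i : nat) : bool :=
  [exists j in J, nat_of_ord j == (i %% n)%N].

Definition prevn (n i : nat) : nat := ((i + n).-1 %% n)%N.

Definition is_profile (f : nat) (tau : tame_type) (J : {set 'I_(fprime f tau)}) : Prop :=
  match tau with
  | PrincipalSeries _ _ => True
  | Cuspidal _ => forall i : nat, (i < 2 * f)%N ->
                    (inJ (fprime f tau) J i = ~~ inJ (fprime f tau) J (i + f)%N)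
  end.

Definition s_J (p f : nat) (tau : tame_type) (J : {set 'I_(fprime f tau)}) (i : nat) : int :=
  let n := fprime f tau in
  if inJ n J (prevn n i)
  then p%:Z - 1 - (gamma p f tau i)%:Z - (nat_of_bool (~~ inJ n J i))%:Z
  else (gamma p f tau i)%:Z - (nat_of_bool (inJ n J i))%:Z.

Definition t_J (p f : nat) (tau : tame_type) (J : {set 'I_(fprime f tau)}) (i : nat) : int :=
  let n := fprime f tau in
  if inJ n J (prevn n i)
  then (gamma p f tau i)%:Z + (nat_of_bool (~~ inJ n J i))%:Z
  else 0.

(* exponent e such that N_{k'/k} (x) = x^e on k'^x *)
Definition norm_exp (p f : nat) (tau : tame_type) : int :=
  match tau with PrincipalSeries _ _ => 1 | Cuspidal _ => (p ^ f)%:Z + 1 end.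

(* theta describes Theta_J = prod_{i<f} omega_i^{theta_i}:
   Theta_J o N_{k'/k} = eta' prod_i (kappa'_i)^{t_{J,i}}, written in exponents of
   kappa'_0 (kappa_i = kappa_0^{p^{f-i}}, kappa'_i = kappa'_0^{p^{f'-i}},
   kappa_0 o N = kappa'_0^{norm_exp}), modulo p^{f'} - 1. *)
Definition Theta_cond (p f : nat) (tau : tame_type) (J : {set 'I_(fprime f tau)})
    (theta : 'I_f -> int) : Prop :=
  let n := fprime f tau in
  (modulus p n %|
     (\sum_(i < f) theta i * (p ^ (f - i))%:Z) * norm_exp p f tau
     - (eta'_exp p f tau + \sum_(i < n) t_J p f tau J i * (p ^ (n - i))%:Z))%Z.

Definition r_tauJ (p f : nat) (tau : tame_type) (J : {set 'I_(fprime f tau)})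
    (theta : 'I_f -> int) : 'I_f -> int * int :=
  fun i => (1 - theta i, - s_J p f tau J i - theta i).

From mathcomp Require Import all_boot all_algebra.
From mathcomp Require Import zify ring.
Import GRing.Theory Num.Theory.

(* Let d_i = r_{i,1} - r_{i,2}, a width in [0, p], and take theta_i = 1 - r_{i,1}:
   then r(tau, J) = r on the nose as soon as s_{J,i} = d_i - 1 for all i.  Solving
   for gamma_i, such a digit in [0, p - 1] exists iff the profile J changes at i
   (i.e. [i - 1 \in J] xor [i \in J]) only when d_i < p and stays put only when
   d_i > 0.  A profile is thus the running parity of a set of changes containing
   every i with d_i = 0 and no i with d_i = p: going once around Z/fZ, a principal
   series profile needs an even number of changes, a cuspidal one (J + f = complement
   of J) an odd number.
   The digits gamma_i fix eta eta'^{-1}; the remaining freedom in eta' is spent on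
   making eta' prod_i (kappa'_i)^{t_{J,i}} factor through the norm, which in the
   cuspidal case rests on a congruence modulo p^f + 1 coming from the symmetry
   gamma_{i+f} = p - 1 - gamma_i.  If some width lies strictly between 0 and p, or
   the number of zero widths is odd, a cuspidal profile exists.  Otherwise all
   widths are 0 or p and, r being non-Steinberg, some width is 0; the principal
   series digits are then p - 1 off J and 0 on J, J is neither empty nor full, and
   so tau is non-scalar. *)

Lemma digit_of_sum p n (G : nat -> nat) k : 0 < p ->
  (forall q, q < n -> G q < p) -> k < n ->
  (\sum_(q < n) G q * p ^ q) %/ p ^ k %% p = G k.
Proof.
elim: n G k => [//|n IHn] G k p_gt0 G_lt k_lt.
rewrite big_ord_recl /= expn0 muln1.
have -> : \sum_(q < n) G (lift ord0 q) * p ^ lift ord0 q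
          = (\sum_(q < n) G q.+1 * p ^ q) * p.
  by rewrite big_distrl; apply: eq_bigr => q _; rewrite /= expnS mulnCA mulnC.
case: k k_lt => [|k] k_lt.
  by rewrite expn0 divn1 addnC modnMDl modn_small ?G_lt.
rewrite expnS divnMA addnC divnMDl // (divn_small (G_lt 0 _)) // addn0.
by apply: (IHn (fun q => G q.+1)) => // q q_lt; apply: G_lt.
Qed.

Lemma sum_pred_expn p n : 0 < p -> (\sum_(q < n) p.-1 * p ^ q).+1 = p ^ n.
Proof.
move=> p_gt0; elim: n => [|n IHn]; first by rewrite big_ord0.
by rewrite big_ord_recr /= -addSn IHn expnS -mulSn prednK.
Qed.

Lemma sum_digits_gt0 p n (G : nat -> nat) : 0 < p ->
  (exists2 q, q < n & 0 < G q) -> 0 < \sum_(q < n) G q * p ^ q.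
Proof.
move=> p_gt0 [q q_lt Gq_gt0]; rewrite (bigD1 (Ordinal q_lt)) //=.
by rewrite ltn_addr // muln_gt0 Gq_gt0 expn_gt0 p_gt0.
Qed.

Lemma sum_digits_lt p n (G : nat -> nat) : 0 < p ->
  (forall q, q < n -> G q < p) -> (exists2 q, q < n & G q < p.-1) ->
  (\sum_(q < n) G q * p ^ q).+1 < p ^ n.
Proof.
move=> p_gt0 G_lt [q q_lt Gq_lt].
rewrite -(sum_pred_expn p n p_gt0) ltnS.
have -> : \sum_(q < n) p.-1 * p ^ q =
          \sum_(q < n) G q * p ^ q + \sum_(q < n) (p.-1 - G q) * p ^ q.
  rewrite -big_split; apply: eq_bigr => i _ /=.
  by rewrite -mulnDl subnKC // -ltnS prednK ?G_lt.
rewrite -[X in X < _]addn0 ltn_add2l.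
by apply: (@sum_digits_gt0 p n (fun q => p.-1 - G q) p_gt0); exists q; rewrite ?subn_gt0.
Qed.

Lemma periodic_modn {T : Type} {F : nat -> T} {n : nat} :
  (forall i, F (i + n) = F i) -> forall i, F (i %% n) = F i.
Proof.
move=> Fn i; rewrite {2}(divn_eq i n); elim: (i %/ n) => [|k IHk].
  by rewrite mul0n add0n.
by rewrite mulSn -addnA [n + _]addnC Fn.
Qed.

(* [digit_for p A B d] is the gamma_i forced by s_{J,i} = d - 1, where A stands for
   [i - 1 \in J] and B for [i \in J]; [admissible p A B d] says it lies in [0, p - 1]. *)
Definition digit_for (p : nat) (A B : bool) (d : nat) : nat :=
  if A then (if B then p - d else p.-1 - d) else (if B then d else d.-1).

Definition admissible (p : nat) (A B : bool) (d : nat) : bool :=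
  (d <= p) && (if A (+) B then d < p else 0 < d).

Section DigitRule.
Context {p d : nat} {A B : bool}.
Hypothesis adm : admissible p A B d.

Lemma digit_for_lt : digit_for p A B d < p.
Proof. by move: adm; case: A; case: B; rewrite /admissible /digit_for /=; lia. Qed.

Lemma digit_for_negb : digit_for p (~~ A) (~~ B) d = p.-1 - digit_for p A B d.
Proof. by move: adm; case: A; case: B; rewrite /admissible /digit_for /=; lia. Qed.

Lemma digit_for_extreme : (d == 0) || (d == p) ->
  digit_for p A B d = if B then 0 else p.-1.
Proof. by move: adm; case: A; case: B; rewrite /admissible /digit_for /=; lia. Qed.

Lemma digit_for_s :
  ((if A then p%:Z - 1 - (digit_for p A B d)%:Z - (~~ B : nat)%:Z
    else (digit_for p A B d)%:Z - (B : nat)%:Z) = d%:Z - 1)%R.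
Proof. by move: adm; case: A; case: B; rewrite /admissible /digit_for /=; lia. Qed.

Lemma digit_for_t :
  ((if A then (digit_for p A B d)%:Z + (~~ B : nat)%:Z else 0) =
   if A then (p - d)%:Z else 0)%R.
Proof. by move: adm; case: A; case: B; rewrite /admissible /digit_for /=; lia. Qed.

Lemma t_negb_sub :
  ((if ~~ A then (p - d)%:Z else 0) - (if A then (p - d)%:Z else 0) =
   p%:Z * (1 - (A : nat)%:Z) - (1 - (B : nat)%:Z) - (digit_for p A B d)%:Z)%R.
Proof. by move: adm; case: A; case: B; rewrite /admissible /digit_for /=; lia. Qed.

End DigitRule.

(* The profile changing exactly at the indices j with [c (j %% f)]. *)
Definition flip_parity f (c : nat -> bool) (i : nat) : bool :=
  odd (\sum_(j < i.+1) c (j %% f)).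

Section FlipParity.
Variables (f : nat) (c : nat -> bool).
Hypothesis f_gt0 : 0 < f.
Local Notation J := (flip_parity f c).

Lemma flip_paritySn i : J i.+1 = J i (+) c (i.+1 %% f).
Proof. by rewrite /flip_parity big_ord_recr /= oddD oddb. Qed.

Lemma flip_parityDf i : J (i + f) = J i (+) odd (\sum_(j < f) c j).
Proof.
elim: i => [|i IHi].
  rewrite add0n /flip_parity big_ord_recr big_ord1 /= modnn mod0n oddD oddb addbC.
  by congr (_ (+) odd _); apply: eq_bigr => j _; rewrite modn_small.
by rewrite addSn !flip_paritySn IHi -addSn modnDr addbAC.
Qed.

Variable n : nat.
Hypothesis n_gt0 : 0 < n.
Hypothesis f_dvd_n : f %| n.
Hypothesis J_periodic : forall i, J (i + n) = J i.

Lemma flip_parity_prev i : J (i + n).-1 (+) J i = c (i %% f).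
Proof.
have := flip_paritySn (i + n).-1; rewrite prednK ?addn_gt0 ?n_gt0 ?orbT // J_periodic.
by move=> ->; rewrite addKb -modnDmr (eqP f_dvd_n) addn0.
Qed.

Lemma flip_parity_admissible p (d : nat -> nat) :
  (forall i, d (i + f) = d i) -> (forall i, d i <= p) ->
  (forall j, j < f -> if c j then d j < p else 0 < d j) ->
  forall i, admissible p (J (i + n).-1) (J i) (d i).
Proof.
move=> d_periodic d_le c_allowed i.
rewrite /admissible flip_parity_prev d_le -(periodic_modn d_periodic).
exact: c_allowed (ltn_pmod i f_gt0).
Qed.

End FlipParity.

Definition digit_seq p n (J : nat -> bool) (d : nat -> nat) (i : nat) : nat :=
  digit_for p (J (i + n).-1) (J i) (d i).

(* gamma_i sits at position n - i (mod n), where [gamma] reads it. *)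
Definition digit_num p n (J : nat -> bool) (d : nat -> nat) : nat :=
  \sum_(q < n) digit_seq p n J d (n - q) * p ^ q.

Definition profile_set n (J : nat -> bool) : {set 'I_n} := [set j : 'I_n | J j].

Section ProfileDigits.
Variables (p n : nat) (J : nat -> bool) (d : nat -> nat).
Hypothesis p_gt0 : 0 < p.
Hypothesis n_gt0 : 0 < n.
Hypothesis J_periodic : forall i, J (i + n) = J i.
Hypothesis d_periodic : forall i, d (i + n) = d i.
Hypothesis J_admissible : forall i, admissible p (J (i + n).-1) (J i) (d i).
Local Notation digit := (digit_seq p n J d).

Lemma digit_seq_lt i : digit i < p.
Proof. exact: digit_for_lt. Qed.

Lemma digit_seq_periodic i : digit (i + n) = digit i.
Proof.
rewrite /digit_seq J_periodic d_periodic.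
by rewrite (_ : (i + n + n).-1 = (i + n).-1 + n) ?J_periodic //; lia.
Qed.

Lemma digit_seq_rev i : i < n -> digit (n - (n - i) %% n) = digit i.
Proof.
case: i => [|i] i_lt; first by rewrite subn0 modnn subn0 -[n]add0n digit_seq_periodic.
by rewrite modn_small ?subKn //; lia.
Qed.

Lemma digit_num_digit i : i < n -> digit_num p n J d %/ p ^ ((n - i) %% n) %% p = digit i.
Proof.
move=> i_lt; rewrite /digit_num (@digit_of_sum p n (fun q => digit (n - q))) //.
- by rewrite digit_seq_rev.
- by move=> q _; apply: digit_seq_lt.
- exact: ltn_pmod.
Qed.

Lemma digit_num_gt0 : (exists2 i, i < n & 0 < digit i) -> 0 < digit_num p n J d.
Proof.
case=> i i_lt digit_gt0; apply: (@sum_digits_gt0 p n (fun q => digit (n - q))) => //.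
by exists ((n - i) %% n); rewrite ?ltn_pmod ?digit_seq_rev.
Qed.

Lemma digit_num_lt : (exists2 i, i < n & digit i < p.-1) -> (digit_num p n J d).+1 < p ^ n.
Proof.
case=> i i_lt digit_lt.
apply: (@sum_digits_lt p n (fun q => digit (n - q))) => // [q _|]; first exact: digit_seq_lt.
by exists ((n - i) %% n); rewrite ?ltn_pmod ?digit_seq_rev.
Qed.

Lemma inJ_profile_set i : inJ n (profile_set n J) i = J i.
Proof.
rewrite -(periodic_modn J_periodic); apply/existsP/idP.
  by case=> j; rewrite inE => /andP[Jj /eqP <-].
by move=> Ji; exists (Ordinal (ltn_pmod i n_gt0)); rewrite inE /= eqxx andbT.
Qed.

End ProfileDigits.

Local Open Scope ring_scope.

Definition profile_t p n (J : nat -> bool) (d : nat -> nat) (i : nat) : int :=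
  if J (i + n).-1 then (p - d i)%:Z else 0.

Section ProfileInvariants.
Variables (p f : nat) (tau : tame_type) (J : nat -> bool) (d : nat -> nat).
Local Notation n := (fprime f tau).
Hypothesis p_gt0 : (0 < p)%N.
Hypothesis f_gt0 : (0 < f)%N.
Hypothesis J_periodic : forall i, J (i + n)%N = J i.
Hypothesis d_periodic : forall i, d (i + n)%N = d i.
Hypothesis J_admissible : forall i, admissible p (J (i + n).-1) (J i) (d i).
Hypothesis diff_exp_tau : diff_exp p f tau = digit_num p n J d.

Let n_gt0 : (0 < n)%N. Proof. by case: tau => /=; lia. Qed.

Lemma gamma_profile i : (i < n)%N -> gamma p f tau i = digit_seq p n J d i.
Proof. by move=> i_lt; rewrite /gamma diff_exp_tau digit_num_digit. Qed.

Lemma s_J_profile i : (i < n)%N -> s_J p f tau (profile_set n J) i = (d i)%:Z - 1.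
Proof.
move=> i_lt; rewrite /s_J /prevn gamma_profile //.
by rewrite !inJ_profile_set // (periodic_modn J_periodic) digit_for_s.
Qed.

Lemma t_J_profile i : (i < n)%N -> t_J p f tau (profile_set n J) i = profile_t p n J d i.
Proof.
move=> i_lt; rewrite /t_J /prevn gamma_profile //.
by rewrite !inJ_profile_set // (periodic_modn J_periodic) digit_for_t.
Qed.

End ProfileInvariants.

Definition realized p f (r : 'I_f -> int * int) : Prop :=
  exists (tau : tame_type) (J : {set 'I_(fprime f tau)}) (theta : 'I_f -> int),
    [/\ non_scalar p f tau, is_profile f tau J, Theta_cond p f tau J theta
      & hodge_equiv p f r (r_tauJ p f tau J theta)].

Lemma hodge_equiv_r_tauJ p f tau J (r : 'I_f -> int * int) :
  (forall i : 'I_f, s_J p f tau J i = (r i).1 - (r i).2 - 1) ->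
  hodge_equiv p f r (r_tauJ p f tau J (fun i => 1 - (r i).1)).
Proof.
move=> s_J_r; exists (fun=> 0); split=> [i|].
  by rewrite /r_tauJ /= s_J_r; split; ring.
by rewrite big1 ?dvdz0 // => i _; rewrite mulr0.
Qed.

Lemma diff_exp_eq p f tau (D : nat) :
  D%:Z < modulus p (fprime f tau) ->
  (modulus p (fprime f tau) %| eta_exp tau - eta'_exp p f tau - D%:Z)%Z ->
  diff_exp p f tau = D.
Proof. by rewrite /diff_exp -eqz_mod_dvd => D_lt /eqP ->; rewrite modz_small ?D_lt. Qed.

Lemma non_scalar_diff_exp p f tau : (0 < diff_exp p f tau)%N -> non_scalar p f tau.
Proof. by rewrite /non_scalar /diff_exp; apply: contraTN => /dvdz_mod0P ->. Qed.

Lemma sum_rev_expn p n (F : nat -> int) : F n = F 0%N ->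
  \sum_(i < n) F i * (p ^ (n - i))%:Z =
  \sum_(q < n) F (n - q)%N * (p ^ q)%:Z + F 0%N * ((p ^ n)%:Z - 1).
Proof.
move=> Fn; pose G q := F (n - q)%N * (p ^ q)%:Z.
have : G 0%N + \sum_(q < n) G q.+1 = \sum_(q < n) G q + G n.
  by transitivity (\sum_(q < n.+1) G q); [rewrite big_ord_recl | rewrite big_ord_recr].
rewrite /G subn0 subnn expn0 mulr1 Fn => shift.
rewrite (reindex_inj rev_ord_inj) /=.
under eq_bigr => i _ do rewrite subKn //.
by rewrite mulrBr mulr1 addrA -shift; ring.
Qed.

Lemma big_ord_double {R : Type} {idx : R} {op : Monoid.law idx} f (F : nat -> R) :
  \big[op/idx]_(q < 2 * f) F q =
  op (\big[op/idx]_(q < f) F q) (\big[op/idx]_(q < f) F (f + q)%N).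
Proof. by rewrite mul2n -addnn big_split_ord. Qed.

Lemma Posz_sum n (F : nat -> nat) : (\sum_(q < n) F q)%N%:Z = \sum_(q < n) (F q)%:Z.
Proof. exact: (big_morph Posz PoszD). Qed.

Lemma cuspidal_exponent (P L T R : int) : (P + 1 %| T - (L + 1))%Z ->
  exists a, (P * P - 1 %| a - a * P - (P - 1) * (P - L))%Z /\
            (P * P - 1 %| R * (P + 1) - (a * P + T))%Z.
Proof.
case/dvdzP=> u T_eq; have -> : T = u * (P + 1) + L + 1 by rewrite -T_eq; ring.
exists (L - P + (R - L - u) * (P + 1)); split; apply/dvdzP.
  by exists (L + u - R); ring.
by exists (1 - (R - L - u)); ring.
Qed.

Lemma widths_of_hodge_type {p f : nat} {r : 'I_f -> int * int} :
  (0 < f)%N -> hodge_type f r -> p_bounded p f r ->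
  exists d : nat -> nat, [/\ forall i : 'I_f, (d i)%:Z = (r i).1 - (r i).2,
    forall i, d (i + f)%N = d i & forall i, (d i <= p)%N].
Proof.
move=> f_gt0 r_hodge r_bounded; pose o i : 'I_f := Ordinal (ltn_pmod i f_gt0).
have o_val (i : 'I_f) : o i = i by apply: val_inj; rewrite /= modn_small.
exists (fun i => `|(r (o i)).1 - (r (o i)).2|%N); split=> [i|i|i].
- by rewrite o_val; have := r_hodge i; lia.
- by rewrite (_ : o (i + f)%N = o i) //; apply: val_inj; rewrite /= modnDr.
- by have := r_hodge (o i); have := r_bounded (o i); lia.
Qed.

Section Realization.
Context {p f : nat} {r : 'I_f -> int * int} {d : nat -> nat}.
Hypothesis p_gt2 : (2 < p)%N.
Hypothesis f_gt0 : (0 < f)%N.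
Hypothesis d_r : forall i : 'I_f, (d i)%:Z = (r i).1 - (r i).2.
Hypothesis d_periodic : forall i, d (i + f)%N = d i.
Hypothesis d_le : forall i, (d i <= p)%N.

Let p_gt0 : (0 < p)%N. Proof. exact: ltn_trans p_gt2. Qed.
Local Notation theta := (fun i : 'I_f => 1 - (r i).1).

Lemma principal_profile_realized (J : nat -> bool) :
  (forall i, J (i + f)%N = J i) ->
  (forall i, admissible p (J (i + f).-1) (J i) (d i)) ->
  (0 < digit_num p f J d)%N -> ((digit_num p f J d).+1 < p ^ f)%N ->
  realized p f r.
Proof.
move=> J_periodic J_admissible D_gt0 D_lt; set D := digit_num p f J d.
pose t := profile_t p f J d.
pose b := \sum_(i < f) theta i * (p ^ (f - i))%:Z - \sum_(i < f) t i * (p ^ (f - i))%:Z.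
pose tau := PrincipalSeries (D%:Z + b) b.
have diff_tau : diff_exp p f tau = D.
  apply: diff_exp_eq; rewrite /modulus /=; last by rewrite addrK subrr dvdz0.
  by rewrite ltrBrDr -PoszD ltz_nat addn1.
exists tau, (profile_set f J), theta; split.
- by apply: non_scalar_diff_exp; rewrite diff_tau.
- by [].
- rewrite /Theta_cond /= /modulus mulr1.
  rewrite [X in b + X](eq_bigr (fun i : 'I_f => t i * (p ^ (f - i))%:Z)) => [|i _].
    by rewrite /b subrK subrr dvdz0.
  by congr (_ * _); apply: (@t_J_profile p f tau J d).
- apply: hodge_equiv_r_tauJ => i; rewrite -d_r.
  by apply: (@s_J_profile p f tau J d).
Qed.

Section CuspidalProfile.
Variable J : nat -> bool.
Hypothesis J_antiperiodic : forall i, J (i + f)%N = ~~ J i.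
Hypothesis J_admissible : forall i, admissible p (J (i + 2 * f).-1) (J i) (d i).
Local Notation n := (2 * f)%N.
Local Notation digit := (digit_seq p n J d).

Let J_periodic i : J (i + n)%N = J i.
Proof. by rewrite mul2n -addnn addnA !J_antiperiodic negbK. Qed.

Let d_periodic2 i : d (i + n)%N = d i.
Proof. by rewrite mul2n -addnn addnA !d_periodic. Qed.

Let prev_shift i : ((i + f + n).-1 = (i + n).-1 + f)%N.
Proof. lia. Qed.

Lemma digit_seq_antiperiodic i : digit (i + f)%N = (p.-1 - digit i)%N.
Proof. by rewrite /digit_seq prev_shift !J_antiperiodic d_periodic digit_for_negb. Qed.

Let low := (\sum_(q < f) digit (n - q) * p ^ q)%N.
Let high := (\sum_(q < f) digit (f - q) * p ^ q)%N.

Let low_add_high : (low + high).+1 = (p ^ f)%N.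
Proof.
rewrite -(sum_pred_expn p f p_gt0) -big_split; congr _.+1; apply: eq_bigr => q _ /=.
have -> : (n - q = f - q + f)%N by have := ltn_ord q; lia.
by rewrite digit_seq_antiperiodic -mulnDl subnK // -ltnS prednK // digit_seq_lt.
Qed.

Lemma digit_num_cuspidal :
  (digit_num p n J d)%:Z = ((p ^ f)%:Z - 1) * ((p ^ f)%:Z - low%:Z).
Proof.
have -> : digit_num p n J d = (low + p ^ f * high)%N.
  rewrite /digit_num (big_ord_double f (fun q => digit (n - q) * p ^ q)%N) big_distrr /=.
  congr (_ + _)%N; apply: eq_bigr => q _.
  rewrite (_ : n - (f + q) = f - q)%N ?expnD 1?mulnCA //.
  by rewrite mul2n -addnn subnDA addnK.
by rewrite -low_add_high -addn1 !PoszD PoszM; ring.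
Qed.

Lemma profile_t_pair q : (q < f)%N ->
  (profile_t p n J d (n - q) - profile_t p n J d (f - q)) * (p ^ q)%:Z =
  (1 - (J (f - q.+1)%N : nat)%:Z) * (p ^ q.+1)%:Z - (1 - (J (f - q)%N : nat)%:Z) * (p ^ q)%:Z
  - (digit (f - q)%N)%:Z * (p ^ q)%:Z.
Proof.
move=> q_lt; have -> : (n - q = f - q + f)%N by lia.
have prev : ((f - q + n).-1 = f - q.+1 + n)%N by lia.
rewrite /profile_t prev_shift J_antiperiodic d_periodic.
rewrite (t_negb_sub (J_admissible (f - q))) /digit_seq prev J_periodic expnS PoszM.
by move: (p ^ q)%N => x; ring.
Qed.

Lemma profile_t_sum_cuspidal :
  ((p ^ f)%:Z + 1 %| \sum_(i < n) profile_t p n J d i * (p ^ (n - i))%:Z - (low%:Z + 1))%Z.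
Proof.
set t := profile_t p n J d; set P := (p ^ f)%:Z.
have t_periodic i : t (i + n)%N = t i.
  rewrite /t /profile_t d_periodic2.
  by rewrite (_ : (i + n + n).-1 = (i + n).-1 + n)%N ?J_periodic //; lia.
pose Y := \sum_(q < f) t (f - q)%N * (p ^ q)%:Z.
have upper : \sum_(q < f) t (n - (f + q))%N * (p ^ (f + q))%:Z = P * Y.
  rewrite /Y big_distrr; apply: eq_bigr => q _ /=.
  rewrite (_ : n - (f + q) = f - q)%N ?expnD ?PoszM; first by ring.
  by rewrite mul2n -addnn subnDA addnK.
(* Pairing t_{i+f} with t_i for i = f - q leaves a telescoping sum. *)
pose C q := (1 - (J (f - q)%N : nat)%:Z) * (p ^ q)%:Z.
have telescope : \sum_(q < f) (C q.+1 - C q) = C f - C 0%N.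
  by rewrite -(big_mkord xpredT (fun q => C q.+1 - C q)) telescope_sumr.
have lower : \sum_(q < f) t (n - q)%N * (p ^ q)%:Z = Y + (C f - C 0%N) - high%:Z.
  rewrite /high (Posz_sum f (fun q => digit (f - q) * p ^ q)%N) -telescope.
  rewrite -addrA -sumrB /Y -big_split /=.
  apply: eq_bigr => q _; rewrite PoszM /C -(profile_t_pair _ (ltn_ord q)) -/t.
  by rewrite mulrBl addrC subrK.
have split : \sum_(q < n) t (n - q)%N * (p ^ q)%:Z = Y + (C f - C 0%N) - high%:Z + P * Y.
  by rewrite (big_ord_double f (fun q => t (n - q)%N * (p ^ q)%:Z)) upper lower.
have J_f : J f = ~~ J 0%N by rewrite -J_antiperiodic add0n.
have high_eq : high%:Z = P - 1 - low%:Z by rewrite /P -low_add_high -addn1 !PoszD; ring.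
have P2 : (p ^ n)%:Z = P * P by rewrite mul2n -addnn expnD PoszM.
rewrite sum_rev_expn; last by have := t_periodic 0%N; rewrite add0n.
rewrite split high_eq P2 /C subnn subn0 expn0 J_f -/P.
apply/dvdzP; exists (Y + t 0%N * (P - 1) - (J 0%N : nat)%:Z).
by case: (J 0%N) => /=; ring.
Qed.

Lemma cuspidal_profile_realized : realized p f r.
Proof.
set R := \sum_(i < f) theta i * (p ^ (f - i))%:Z.
have [a [diff_a theta_a]] := cuspidal_exponent _ _ _ R profile_t_sum_cuspidal.
set P := (p ^ f)%:Z in diff_a theta_a; pose tau := Cuspidal a.
have P2 : (p ^ n)%:Z = P * P by rewrite mul2n -addnn expnD PoszM.
have n_gt0 : (0 < n)%N by rewrite muln_gt0.
have P_gt1 : 1 < P.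
  have : (p <= p ^ f)%N by rewrite -{1}(expn1 p) leq_pexp2l.
  by rewrite /P; lia.
have low_lt : low%:Z < P by rewrite ltz_nat -low_add_high ltnS leq_addr.
have D_gt0 : 0 < (digit_num p n J d)%:Z.
  by rewrite digit_num_cuspidal mulr_gt0 // subr_gt0.
have diff_tau : diff_exp p f tau = digit_num p n J d.
  apply: diff_exp_eq; rewrite /modulus /= P2 digit_num_cuspidal //.
  rewrite -[P * P - 1](_ : (P - 1) * (P + 1) = _); last by ring.
  by rewrite ltr_pM2l ?subr_gt0 //; lia.
exists tau, (profile_set n J), theta; split.
- by apply: non_scalar_diff_exp; rewrite diff_tau -ltz_nat.
- by move=> i _; rewrite /= !inJ_profile_set // J_antiperiodic negbK.
- rewrite /Theta_cond /= /modulus P2.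
  rewrite (eq_bigr (fun i : 'I_n => profile_t p n J d i * (p ^ (n - i))%:Z)) => [|i _].
    exact: theta_a.
  by congr (_ * _); apply: (@t_J_profile p f tau J d).
- apply: hodge_equiv_r_tauJ => i; rewrite -d_r.
  by apply: (@s_J_profile p f tau J d) => //; rewrite /tau /=; have := ltn_ord i; lia.
Qed.

End CuspidalProfile.

Lemma cuspidal_flips_realized (c : nat -> bool) :
  (forall j, j < f -> if c j then d j < p else 0 < d j)%N ->
  odd (\sum_(j < f) c j) -> realized p f r.
Proof.
move=> c_allowed c_odd; pose J := flip_parity f c.
have J_antiperiodic i : J (i + f)%N = ~~ J i by rewrite /J flip_parityDf // c_odd addbT.
have J_periodic i : J (i + 2 * f)%N = J i.
  by rewrite mul2n -addnn addnA !J_antiperiodic negbK.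
apply: (@cuspidal_profile_realized J J_antiperiodic).
apply: flip_parity_admissible => //; first by rewrite muln_gt0.
exact: dvdn_mull.
Qed.

Lemma odd_zeros_realized : odd (\sum_(j < f) (d j == 0)%N) -> realized p f r.
Proof.
by apply: (cuspidal_flips_realized (fun j => d j == 0%N)) => j _; case: eqP => [->|/eqP]; lia.
Qed.

Lemma free_width_realized (k : 'I_f) : (0 < d k < p)%N -> realized p f r.
Proof.
move=> /andP[dk_gt0 dk_lt].
have [|zeros_even] := boolP (odd (\sum_(j < f) (d j == 0)%N)); first exact: odd_zeros_realized.
pose c j := (d j == 0%N) || (j == k).
have sum_c : (\sum_(j < f) c j = (\sum_(j < f) (d j == 0%N)).+1)%N.
  rewrite (bigD1 k) // [in RHS](bigD1 k) //= /c eqxx orbT (_ : (d k == 0%N) = false); last by lia.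
  congr _.+1; apply: eq_bigr => j /negbTE j_neq_k.
  by rewrite -[(j == k :> nat)]/(j == k) j_neq_k orbF.
apply: (cuspidal_flips_realized c) => [j _|]; last by rewrite sum_c /= zeros_even.
rewrite /c; case: (d j =P 0%N) => [->|dj_neq0] /=; first lia.
by case: (j =P k) => [->|_]; lia.
Qed.

Lemma extreme_widths_realized :
  (forall j, j < f -> (d j == 0) || (d j == p))%N -> (exists2 j, j < f & d j = 0)%N ->
  realized p f r.
Proof.
move=> d_extreme [j j_lt dj0].
have [|zeros_even] := boolP (odd (\sum_(j < f) (d j == 0)%N)); first exact: odd_zeros_realized.
pose c j := (d j == 0)%N; pose J := flip_parity f c.
have J_periodic i : J (i + f)%N = J i by rewrite /J flip_parityDf // (negbTE zeros_even) addbF.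
have J_admissible : forall i, admissible p (J (i + f).-1) (J i) (d i).
  by apply: flip_parity_admissible => // k _; rewrite /c; case: eqP => [->|/eqP]; lia.
have digit_extreme i : digit_seq p f J d i = if J i then 0%N else p.-1.
  apply: digit_for_extreme; first exact: J_admissible.
  by rewrite -(periodic_modn d_periodic) d_extreme ?ltn_pmod.
have J_takes b : exists2 i, (i < f)%N & J i = b.
  have J_change : J (j + f).-1 (+) J j.
    by rewrite /J flip_parity_prev ?dvdnn // modn_small // /c dj0.
  case: (J j =P b) => [|Jj_b]; first by exists j.
  exists ((j + f).-1 %% f)%N; first exact: ltn_pmod.
  by rewrite (periodic_modn J_periodic); move: J_change Jj_b; case: b; case: (J _); case: (J _).
apply: (@principal_profile_realized J J_periodic J_admissible).
  apply: digit_num_gt0 => //; have [i i_lt Ji] := J_takes false.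
  by exists i; rewrite // digit_extreme Ji; lia.
apply: digit_num_lt => //; have [i i_lt Ji] := J_takes true.
by exists i; rewrite // digit_extreme Ji; lia.
Qed.

End Realization.

Theorem proposition4p11 (p f : nat) (r : 'I_f -> int * int) :
  prime p -> (2 < p)%N -> (0 < f)%N ->
  hodge_type f r -> p_bounded p f r -> ~ steinberg p f r ->
  exists (tau : tame_type) (J : {set 'I_(fprime f tau)}) (theta : 'I_f -> int),
    [/\ non_scalar p f tau, is_profile f tau J, Theta_cond p f tau J theta
      & hodge_equiv p f r (r_tauJ p f tau J theta)].
Proof.
move=> _ p_gt2 f_gt0 r_hodge r_bounded r_not_steinberg; change (realized p f r).
have [d [d_r d_periodic d_le]] := widths_of_hodge_type f_gt0 r_hodge r_bounded.
have [k d_free|no_free] := pickP (fun k : 'I_f => 0 < d k < p)%N.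
  exact: (free_width_realized p_gt2 f_gt0 d_r d_periodic d_le k d_free).
have d_extreme j : (j < f)%N -> (d j == 0%N) || (d j == p).
  by move=> j_lt; have := no_free (Ordinal j_lt); have := d_le j; rewrite /=; lia.
apply: (extreme_widths_realized p_gt2 f_gt0 d_r d_periodic d_le d_extreme).
case: (pickP (fun j : 'I_f => d j == 0%N)) => [j /eqP dj0|no_zero]; first by exists j.
exfalso; apply: r_not_steinberg => i; rewrite -d_r.
by move: (d_extreme i (ltn_ord i)) (no_zero i) => /orP[/eqP ->|/eqP ->].
Qed.
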